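(* Let $\vdash$ be the logic determined by a reduced matrix $\langle\mathbf{A},F\rangle$. (1) If $\mathbf{A}$ is trivial, then $\vdash$ is weakly algebraizable if and only if $F=A$. (2) If $\mathbf{A}$ is non-trivial and all its basic operations are constants, then $\vdash$ is not weakly algebraizable. (3) If $\mathbf{A}$ is trivial, then $\vdash$ is truth-equational if and only if $F=A$. (4) If $\mathbf{A}$ is non-trivial and all its basic operations are constants, then $\vdash$ is truth-equational if and only if there is a constant symbol $\mathbf{a}$ which is interpreted in $\mathbf{A}$ as an element of $F$.
   Context: A (logical) matrix is a pair $\langle \mathbf{A}, F\rangle$ with $\mathbf{A}$ an algebra and $F\subseteq A$. The Leibniz congruence $\Omega^{\mathbf{A}}F$ is the largest congruence of $\mathbf{A}$ for which $F$ is a union of blocks; the matrix is reduced if $\Omega^{\mathbf{A}}F$ is the identity. A logic is a substitution-invariant closure relation on formulas of a fixed algebraic language; the logic determined by $\langle\mathbf{A},F\rangle$: $\Gamma\vdash\varphi$ iff every evaluation $f$ into $\mathbf{A}$ with $f[\Gamma]\subseteq F$ has $f(\varphi)\in F$. A model of $\vdash$ is a matrix $\langle\mathbf{B},G\rangle$ with $\vdash\subseteq\vdash_{\langle\mathbf{B},G\rangle}$; $\mathrm{Mod}^{*}(\vdash)$ is the class of reduced models. $\vdash$ is protoalgebraic if there is a set of formulas $\Delta(x,y,\vec z)$ such that for every model $\langle\mathbf{B},G\rangle$ and $a,b\in B$: $\langle a,b\rangle\in\Omega^{\mathbf{B}}G$ iff $\Delta(a,b,\vec c)\subseteq G$ for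 all $\vec c\in B$. $\vdash$ is truth-equational if there is a set of equations $\tau(x)$ with $G=\{b\in B:\mathbf{B}\vDash\tau(b)\}$ for every $\langle\mathbf{B},G\rangle\in\mathrm{Mod}^{*}(\vdash)$. Weakly algebraizable = protoalgebraic and truth-equational. *)

From mathcomp Require Import all_boot.
Set Implicit Arguments. Unset Strict Implicit. Unset Printing Implicit Defensive.

Record signature := Signature { ops : Type; arity : ops -> nat }.

Record algebra (L : signature) := Algebra {
  carrier :> Type;
  op : forall o : ops L, ('I_(arity o) -> carrier) -> carrier }.

Inductive formula (L : signature) : Type :=
| Var : nat -> formula L
| App : forall o : ops L, ('I_(arity o) -> formula L) -> formula L.

Fixpoint eval (L : signature) (A : algebra L) (h : nat -> A) (t : formula L) : A :=
  match t with
  | Var n => h n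
  | App o ts => @op L A o (fun i => eval h (ts i))
  end.

Definition logic (L : signature) := (formula L -> Prop) -> formula L -> Prop.

Definition matrix_logic (L : signature) (A : algebra L) (F : A -> Prop) : logic L :=
  fun Gamma phi => forall h : nat -> A,
    (forall g, Gamma g -> F (eval h g)) -> F (eval h phi).

Definition congruence (L : signature) (A : algebra L) (th : A -> A -> Prop) : Prop :=
  (forall a, th a a) /\ (forall a b, th a b -> th b a) /\
  (forall a b c, th a b -> th b c -> th a c) /\
  (forall (o : ops L) (xs ys : 'I_(arity o) -> A),
      (forall i, th (xs i) (ys i)) -> th (@op L A o xs) (@op L A o ys)).

Definition compatible (L : signature) (A : algebra L) (th : A -> A -> Prop) (F : A -> Prop) :=
  forall a b, th a b -> F a -> F b.

(* Leibniz congruence: the largest congruence compatible with F, presented as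
   the union of all congruences compatible with F (which is that largest one). *)
Definition Leibniz (L : signature) (A : algebra L) (F : A -> Prop) (a b : A) : Prop :=
  exists th, congruence th /\ compatible th F /\ th a b.

Definition reduced (L : signature) (A : algebra L) (F : A -> Prop) : Prop :=
  forall a b, Leibniz F a b -> a = b.

Definition model (L : signature) (lg : logic L) (B : algebra L) (G : B -> Prop) : Prop :=
  forall Gamma phi, lg Gamma phi -> matrix_logic G Gamma phi.

(* Protoalgebraic: a set Delta(x, y, z...) of formulas, x = var 0, y = var 1,
   the remaining variables being the parameters z. *)
Definition protoalgebraic (L : signature) (lg : logic L) : Prop :=
  exists Delta : formula L -> Prop,
    forall (B : algebra L) (G : B -> Prop), model lg G ->
      forall a b : B,
        Leibniz G a b <->
        (forall h : nat -> B, h 0 = a -> h 1 = b ->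
           forall d, Delta d -> G (eval h d)).

(* Truth-equational: a set tau(x) of equations (pairs of formulas) in the
   variable x; B |= tau(b) is evaluated by sending every variable to b. *)
Definition truth_equational (L : signature) (lg : logic L) : Prop :=
  exists tau : formula L * formula L -> Prop,
    forall (B : algebra L) (G : B -> Prop), model lg G -> reduced G ->
      forall b : B,
        G b <-> (forall e, tau e -> eval (fun _ => b) e.1 = eval (fun _ => b) e.2).

Definition weakly_algebraizable (L : signature) (lg : logic L) : Prop :=
  protoalgebraic lg /\ truth_equational lg.

Definition trivial_alg (L : signature) (A : algebra L) : Prop := forall a b : A, a = b.

Definition all_constants (L : signature) : Prop := forall o : ops L, arity o = 0.

Lemma ord_arity0_absurd n (H : n = 0) (i : 'I_n) : False.
Proof. by case: i => m; rewrite H. Qed.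

Definition const_val (L : signature) (A : algebra L) (o : ops L) (H : arity o = 0) : A :=
  @op L A o (fun i => False_rect A (ord_arity0_absurd H i)).

(** When all operations are constants, every formula is a variable or denotes
    a fixed element, so its value at an assignment [h] is also its value at
    the constant assignment to that value. Hence reflexivity of the
    Leibniz congruence forces every protoalgebraic Δ to hold everywhere, and
    the Leibniz congruence of every model is total: no such logic of a
    non-trivial reduced matrix is protoalgebraic. For truth-equationality, a
    constant [c] in [F] gives the defining equation [x ≈ c]; if there is none,
    the logic has no theorems, so the one-element algebra with empty filter
    is a reduced model, which no set of equations can define. Over a trivial
    algebra equations always hold, so truth-equationality forces [F = A], and
    a full filter yields a weakly algebraizable logic with [Δ = τ = ∅]. *)

From Stdlib Require Import Classical FunctionalExtensionality.
From mathcomp Require Import all_boot.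

Set Implicit Arguments. Unset Strict Implicit. Unset Printing Implicit Defensive.

Section Formulas.

Variable L : signature.

Lemma eq_fun_ord0 n (n0 : n = 0) T (f g : 'I_n -> T) : f = g.
Proof. by apply: functional_extensionality => i; case: (ord_arity0_absurd n0 i). Qed.

Lemma eval_const (A : algebra L) (h : nat -> A) o (o0 : arity o = 0)
    (ts : 'I_(arity o) -> formula L) :
  eval h (@App L o ts) = const_val A o0.
Proof. by congr (@op _ _ o _); apply: eq_fun_ord0. Qed.

Lemma eval_const_env (A : algebra L) (h : nat -> A) (t : formula L) :
  all_constants L -> eval h t = eval (fun _ => eval h t) t.
Proof. by move=> allc; case: t => [//|o ts]; rewrite !(eval_const _ (allc o)). Qed.

Definition const_formula o (o0 : arity o = 0) : formula L :=
  @App L o (fun i => False_rect _ (ord_arity0_absurd o0 i)).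

Lemma eval_const_formula (A : algebra L) (h : nat -> A) o (o0 : arity o = 0) :
  eval h (const_formula o0) = const_val A o0.
Proof. exact: eval_const. Qed.

Definition unit_algebra : algebra L := @Algebra L unit (fun _ _ => tt).

Lemma unit_algebra_trivial : trivial_alg unit_algebra.
Proof. by move=> [] []. Qed.

End Formulas.

Section Leibniz.

Variables (L : signature) (B : algebra L) (G : B -> Prop).

Lemma congruence_total : congruence (fun _ _ : B => True).
Proof. by []. Qed.

Lemma congruence_all_constants (th : B -> B -> Prop) :
  all_constants L -> (forall a, th a a) -> (forall a b, th a b -> th b a) ->
  (forall a b c, th a b -> th b c -> th a c) -> congruence th.
Proof.
move=> allc thR thS thT; do 3!split=> //.
by move=> o xs ys _; rewrite (eq_fun_ord0 (allc o) xs ys).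
Qed.

Lemma Leibniz_full a b : (forall x, G x) -> Leibniz G a b.
Proof.
move=> Gfull; exists (fun _ _ => True); split; first exact: congruence_total.
by split=> // x y _ _; apply: Gfull.
Qed.

Lemma Leibniz_all_constants a b : all_constants L -> (G a <-> G b) -> Leibniz G a b.
Proof.
move=> allc Gab; exists (fun x y => G x <-> G y); split=> //.
  by apply: congruence_all_constants => // [x y [] | x y z [] ? ? [] ? ?]; split; auto.
by split=> // x y [].
Qed.

Lemma reduced_full_trivial : reduced G -> (forall x, G x) -> trivial_alg B.
Proof. by move=> red Gfull a b; apply/red/Leibniz_full. Qed.

Lemma trivial_reduced : trivial_alg B -> reduced G.
Proof. by move=> triv a b _; apply: triv. Qed.

End Leibniz.

Section Models.

Variable L : signature.

Lemma model_matrix_logic (A : algebra L) (F : A -> Prop) : model (matrix_logic F) F.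
Proof. by []. Qed.

Lemma model_theorem (lg : logic L) (B : algebra L) (G : B -> Prop) phi :
  model lg G -> lg (fun _ => False) phi -> forall h, G (eval h phi).
Proof. by move=> M /M thm h; apply: thm. Qed.

Lemma model_empty_filter (A : algebra L) (F : A -> Prop) (B : algebra L) :
  (forall phi, ~ matrix_logic F (fun _ => False) phi) ->
  model (matrix_logic F) (fun _ : B => False).
Proof.
move=> noThm Gamma phi ent h hGamma.
by apply: (noThm phi) => h' _; apply: ent => g /hGamma.
Qed.

Lemma model_full (A : algebra L) (F : A -> Prop) (B : algebra L) (G : B -> Prop) :
  (forall a, F a) -> model (matrix_logic F) G -> forall b, G b.
Proof. by move=> Ffull M b; apply: (model_theorem (phi := Var L 0) M _ (fun _ => b)). Qed.

Lemma truth_equational_trivial_full (lg : logic L) (B : algebra L) (G : B -> Prop) :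
  truth_equational lg -> model lg G -> reduced G -> trivial_alg B -> forall b, G b.
Proof. by move=> [tau Htau] M red triv b; apply/(Htau B G M red b) => e _; apply: triv. Qed.

Lemma protoalgebraic_all_constants_Leibniz (lg : logic L) (B : algebra L)
    (G : B -> Prop) :
  all_constants L -> protoalgebraic lg -> model lg G -> forall a b, Leibniz G a b.
Proof.
move=> allc [Delta HDelta] M a b; apply/(HDelta B G M) => h _ _ d Dd.
have GDelta_refl x := proj1 (HDelta B G M x x) (Leibniz_all_constants allc (iff_refl _)).
by rewrite (eval_const_env _ _ allc); apply: GDelta_refl.
Qed.

Lemma full_weakly_algebraizable (A : algebra L) (F : A -> Prop) :
  (forall a, F a) -> weakly_algebraizable (matrix_logic F).
Proof.
move=> Ffull; split.
  exists (fun _ => False) => B G M a b; split=> [_ h _ _ d []|_].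
  exact/Leibniz_full/(model_full Ffull M).
exists (fun _ => False) => B G M _ b; split=> [_ e []|_].
exact: (model_full Ffull M).
Qed.

Section AllConstants.

Variables (A : algebra L) (F : A -> Prop).
Hypothesis allc : all_constants L.

Lemma truth_equational_const o (o0 : arity o = 0) :
  F (const_val A o0) -> truth_equational (matrix_logic F).
Proof.
move=> Fc; exists (fun e => e = (Var L 0, const_formula o0)) => B G M red x.
have Gc : G (const_val B o0).
  rewrite -(eval_const_formula (fun _ => x)); apply: (model_theorem M) => h _.
  by rewrite eval_const_formula.
split=> [Gx e -> | /(_ _ erefl)]; rewrite eval_const_formula /=; last by move->.
exact/red/Leibniz_all_constants.
Qed.

Lemma truth_equational_const_in_filter :
  reduced F -> (exists a b : A, a <> b) -> truth_equational (matrix_logic F) ->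
  exists o (o0 : arity o = 0), F (const_val A o0).
Proof.
move=> red [a [b neq_ab]] te; apply: NNPP => noConst.
have noThm phi : ~ matrix_logic F (fun _ => False) phi.
  move=> thm; case: phi thm => [n|o ts] thm.
    apply/neq_ab/(reduced_full_trivial red) => x.
    exact: (model_theorem (model_matrix_logic (F := F)) thm (fun _ => x)).
  apply: noConst; exists o, (allc o); rewrite -(eval_const (fun _ => a) _ ts).
  exact: (model_theorem (model_matrix_logic (F := F)) thm).
have M := model_empty_filter (B := unit_algebra L) noThm.
have triv := @unit_algebra_trivial L.
exact: (truth_equational_trivial_full te M (trivial_reduced triv) triv tt).
Qed.

End AllConstants.

End Models.

Theorem lemma2p3 (L : signature) (A : algebra L) (F : A -> Prop) :
  reduced F ->
  (trivial_alg A ->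
     (weakly_algebraizable (matrix_logic F) <-> (forall a : A, F a))) /\
  ((exists a b : A, a <> b) -> all_constants L ->
     ~ weakly_algebraizable (matrix_logic F)) /\
  (trivial_alg A ->
     (truth_equational (matrix_logic F) <-> (forall a : A, F a))) /\
  ((exists a b : A, a <> b) -> all_constants L ->
     (truth_equational (matrix_logic F) <->
      exists (o : ops L) (H : arity o = 0), F (@const_val L A o H))).
Proof.
move=> red; have self := model_matrix_logic (F := F).
have te_full triv te := truth_equational_trivial_full te self red triv.
split; [|split; [|split]].
- move=> triv; split=> [[_ te]|]; [exact: te_full | exact: full_weakly_algebraizable].
- move=> [a [b neq_ab]] allc [pa _]; apply/neq_ab/red.
  exact: (protoalgebraic_all_constants_Leibniz allc pa self).
- move=> triv; split=> [|Ffull]; first exact: te_full.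
  exact: (full_weakly_algebraizable Ffull).2.
- move=> nontriv allc; split; first exact: truth_equational_const_in_filter.
  by move=> [o [o0 Fc]]; apply: (truth_equational_const allc Fc).
Qed.
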